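(* Assume the standing assumptions and let $\bar u\in V$ be a local solution of \[ \min_{u\in V}\ F(u)+\frac\alpha2\|u\|_V^2+\beta\int_\Omega|u|^p\,dx , \] i.e. there is $\rho>0$ such that the objective at $\bar u$ is not larger than at any $u$ with $\|u-\bar u\|_V\le\rho$. Then there exists $\bar\lambda\in V^*$ such that \[ \alpha\langle\bar u,v\rangle_V+\beta\langle\bar\lambda,v\rangle_{V^*,V}=-F'(\bar u)v\quad\forall v\in V, \qquad \langle\bar\lambda,\bar u\rangle_{V^*,V}=p\int_\Omega|\bar u|^p\,dx . \]
   Context: Standing assumptions: $\Omega\subset\mathbb R^d$ bounded Lipschitz domain; $V$ real Hilbert space with inner product $\langle\cdot,\cdot\rangle_V$, $V\subset L^2(\Omega)$ with compact and dense embedding; $V^*$ dual with pairing $\langle\cdot,\cdot\rangle_{V^*,V}$. $F:V\to\mathbb R$ weakly lower semicontinuous, bounded below by an affine function ($F(u)\ge\langle g,u\rangle_{V^*,V}+c$ for some $g\in V^*$, $c\in\mathbb R$), and continuously Fréchet differentiable with derivative $F'(u)\in V^*$. $\alpha>0$, $\beta>0$, $p\in(0,1)$. *)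

From HB Require Import structures.
From mathcomp Require Import all_boot all_order all_algebra.
From mathcomp Require Import all_classical all_reals all_analysis.
Set Implicit Arguments. Unset Strict Implicit. Unset Printing Implicit Defensive.
Import Order.TTheory GRing.Theory Num.Theory.
Import numFieldNormedType.Exports.
Local Open Scope classical_set_scope.
Local Open Scope ring_scope.

Definition Borel (R : realType) (d : nat) :=
  g_sigma_algebraType (@open 'rV[R]_d).

(* The d-dimensional Lebesgue measure (on Borel sets): the measure
   giving every closed box its volume.  This determines it uniquely. *)
Definition is_lebesgue_measure (R : realType) (d : nat)
    (leb : {measure set (Borel R d) -> \bar R}) : Prop :=
  forall a b : 'rV[R]_d, (forall i, a ord0 i <= b ord0 i) ->
    leb [set x : Borel R d | forall i, a ord0 i <= x ord0 i <= b ord0 i]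
    = (\prod_(i < d) (b ord0 i - a ord0 i))%:E.

(* Bounded Lipschitz domain: a bounded open set whose boundary is locally
   (after an orthogonal change of coordinates) the graph of a Lipschitz
   function, with the set lying on one side (below the graph). *)
Definition lipschitz_fun (R : realType) (d : nat) (g : 'rV[R]_d -> R) : Prop :=
  exists L : R, forall y z, `|g y - g z| <= L * `|y - z|.

Definition zero_coord (R : realType) (d : nat) (j : 'I_d) (z : 'rV[R]_d) :
  'rV[R]_d := \row_k (if k == j then 0 else z ord0 k).

Definition bounded_lipschitz_domain (R : realType) (d : nat)
    (Om : set 'rV[R]_d) : Prop :=
  [/\ open Om,
      (exists M : R, forall x, Om x -> `|x| <= M) &
      forall x, closure Om x -> ~ Om x ->
        exists (U : set 'rV[R]_d) (Q : 'M[R]_d) (j : 'I_d) (g : 'rV[R]_d -> R),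
          [/\ open U /\ U x, Q *m Q^T = 1%:M, lipschitz_fun g,
              (forall z, g z = g (zero_coord j z)) &
              Om `&` U = [set y | U y /\ ((y - x) *m Q) ord0 j < g ((y - x) *m Q)]]].

Definition L2_on (R : realType) (d : nat) (leb : {measure set (Borel R d) -> \bar R})
    (Om : set 'rV[R]_d) (f : 'rV[R]_d -> R) : Prop :=
  measurable_fun (Om : set (Borel R d)) (f : Borel R d -> R) /\
  (\int[leb]_(x in (Om : set (Borel R d))) ((f x) ^+ 2)%:E < +oo)%E.

Definition L2_dist2 (R : realType) (d : nat) (leb : {measure set (Borel R d) -> \bar R})
    (Om : set 'rV[R]_d) (f g : 'rV[R]_d -> R) : \bar R :=
  (\int[leb]_(x in (Om : set (Borel R d))) ((f x - g x) ^+ 2)%:E)%E.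

Definition inner_product_of (R : realType) (V : normedModType R)
    (ip : V -> V -> R) : Prop :=
  [/\ forall (a : R) (u v w : V), ip (a *: u + v) w = a * ip u w + ip v w,
      forall u v, ip u v = ip v u &
      forall u, ip u u = `|u| ^+ 2].

Definition in_dual (R : realType) (V : normedModType R) (l : V -> R) : Prop :=
  (forall (a : R) (u v : V), l (a *: u + v) = a * l u + l v) /\ continuous l.

Definition weak_cvg (R : realType) (V : normedModType R) (u_ : nat -> V) (u : V) :
  Prop := forall l : V -> R, in_dual l -> (fun n => l (u_ n)) @ \oo --> l u.

Definition weakly_lsc (R : realType) (V : normedModType R) (F : V -> R) : Prop :=
  forall (u_ : nat -> V) (u : V), weak_cvg u_ u ->
    ((F u)%:E <= limn_einf (fun n => (F (u_ n))%:E))%E.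

(* F is continuously Frechet differentiable: differentiable everywhere and
   u |-> F'(u) continuous from V to V^* (operator norm). *)
Definition C1_frechet (R : realType) (V : normedModType R) (F : V -> R) : Prop :=
  (forall u : V, differentiable F u) /\
  forall (u : V) (eps : R), 0 < eps -> exists2 delta : R, 0 < delta &
    forall w : V, `|w - u| < delta ->
      forall v : V, `|'d F w v - 'd F u v| <= eps * `|v|.

(* Put λ := -(F'(ū) + α⟨ū,·⟩)/β; it lies in V* and satisfies the first
   identity by construction.  The second identity comes from testing the
   local minimality of ū along the ray t ↦ t ū: by the scaling of the
   penalty, the objective there is
     h(t) = F(t ū) + α/2 t² ‖ū‖² + β t^p ∫|ū|^p,
   which is differentiable near t = 1 (the integral is finite because Ω has
   finite measure and |y|^p ≤ 1 + y²) and minimal at t = 1.  Hence h'(1) = 0,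
   i.e. F'(ū)ū + α‖ū‖² + β p ∫|ū|^p = 0, which is λ(ū) = p ∫|ū|^p. *)

From HB Require Import structures.
From mathcomp Require Import all_boot all_order all_algebra.
From mathcomp Require Import all_classical all_reals all_analysis.
Import Order.TTheory GRing.Theory Num.Theory.
Import numFieldNormedType.Exports.
From mathcomp Require Import lra ring measurable_realfun.
Set Implicit Arguments. Unset Strict Implicit. Unset Printing Implicit Defensive.
Local Open Scope classical_set_scope.
Local Open Scope ring_scope.

Section BoundedSets.
Variables (R : realType) (d : nat).

Lemma ler_coord_norm (x : 'rV[R]_d) i : `|x ord0 i| <= `|x|.
Proof.
change (`|x ord0 i| <= mx_norm x); rewrite mx_normE.
rewrite -[leLHS]nngE num_le; exact: (le_bigmax _ _ (ord0, i)).
Qed.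

Lemma closed_box (a b : 'rV[R]_d) :
  closed [set x : 'rV[R]_d | forall i, a ord0 i <= x ord0 i <= b ord0 i].
Proof.
have -> : [set x : 'rV[R]_d | forall i, a ord0 i <= x ord0 i <= b ord0 i] =
    \bigcap_(i in setT) ((fun x : 'rV[R]_d => x ord0 i) @^-1` [set y | a ord0 i <= y]
      `&` (fun x : 'rV[R]_d => x ord0 i) @^-1` [set y | y <= b ord0 i]).
  apply/seteqP; split => x /=.
    by move=> H i _; have /andP[] := H i.
  by move=> H i; have [/= -> ->] := H i I.
apply: closed_bigI => i _; apply: closedI; apply: preimage_closed;
  by [move=> ? ?; exact: coord_continuous | exact: closed_ge | exact: closed_le].
Qed.

Lemma bounded_measure_lty (leb : {measure set (Borel R d) -> \bar R})
    (A : set 'rV[R]_d) :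
  is_lebesgue_measure leb -> measurable (A : set (Borel R d)) ->
  (exists M : R, forall x, A x -> `|x| <= M) -> (leb A < +oo)%E.
Proof.
move=> hleb mA [M hM]; pose a : 'rV[R]_d := const_mx (- `|M|).
pose b : 'rV[R]_d := const_mx `|M|.
have ab i : a ord0 i <= b ord0 i by rewrite !mxE; have := normr_ge0 M; lra.
have := hleb a b ab; set B := [set x | _] => hB.
have mB : measurable (B : set (Borel R d)).
  rewrite -[B]setCK; apply: measurableC; apply: sub_sigma_algebra.
  by apply: closed_openC; exact: closed_box.
apply: (@le_lt_trans _ _ (leb B)); last by rewrite hB ltry.
apply: le_measure; rewrite ?inE // => x /hM xM i; rewrite !mxE -ler_norml.
exact: le_trans (ler_coord_norm x i) (le_trans xM (ler_norm M)).
Qed.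

End BoundedSets.

Lemma powR_norm_le_1Dsqr (R : realType) (p y : R) : 0 < p -> p < 1 ->
  `|y| `^ p <= 1 + y ^+ 2.
Proof.
move=> p0 p1; have y2 := sqr_ge0 y.
have [y1|y1] := leP `|y| 1.
  have [->|y0] := eqVneq `|y| 0; first by rewrite powR0 ?gt_eqF //; lra.
  have : `|y| `^ p <= `|y| `^ 0.
    by apply: ger_powR; [rewrite normr_gt0 -normr_eq0 y0 y1 | exact: ltW].
  by rewrite powRr0; lra.
have := @ler1_powR R `|y| p (ltW y1) (ltW p1).
have : `|y| <= y ^+ 2 by rewrite -real_normK ?num_real // expr2; nra.
lra.
Qed.

Lemma ae_linear_scale (R : realType) (d : measure_display) (T : measurableType d)
    (mu : {measure set T -> \bar R}) (D : set T) (V : lmodType R)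
    (iota : V -> T -> R) :
  (forall (a : R) (u v : V),
     {ae mu, forall x, D x -> iota (a *: u + v) x = a * iota u x + iota v x}) ->
  forall (t : R) (u : V),
    {ae mu, forall x, D x -> iota (t *: u) x = t * iota u x}.
Proof.
move=> iota_lin t u.
apply: filterS2 (iota_lin 1 0 0) (iota_lin t u 0) => x h0 h1 Dx.
have := h0 Dx; rewrite scale1r addr0 mul1r => e0.
by have := h1 Dx; rewrite addr0 => ->; lra.
Qed.

Section PowerIntegral.
Variables (R : realType) (d : measure_display) (T : measurableType d).
Variables (mu : {measure set T -> \bar R}) (D : set T) (p : R).
Hypothesis mD : measurable D.

Lemma measurable_powR_norm (f : T -> R) :
  measurable_fun D f -> measurable_fun D (fun x => (`|f x| `^ p)%:E).
Proof.
move=> mf; apply/measurable_EFinP.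
apply: (measurableT_comp (measurable_powR _)).
by apply: measurableT_comp => //; exact: normr_measurable.
Qed.

Lemma integral_powR_norm_lty (f : T -> R) : 0 < p -> p < 1 ->
  (mu D < +oo)%E -> measurable_fun D f ->
  (\int[mu]_(x in D) ((f x) ^+ 2)%:E < +oo)%E ->
  (\int[mu]_(x in D) (`|f x| `^ p)%:E < +oo)%E.
Proof.
move=> p0 p1 Dfin mf f2.
have mf2 : measurable_fun D (fun x => ((f x) ^+ 2)%:E).
  exact/measurable_EFinP/measurable_funX.
apply: (@le_lt_trans _ _ (\int[mu]_(x in D) ((cst 1%:E) x + ((f x) ^+ 2)%:E))%E).
  apply: (ge0_le_integral mu mD).
  - by move=> x _; rewrite lee_fin powR_ge0.
  - exact: measurable_powR_norm.
  - by apply: emeasurable_funD => //; exact: measurable_cst.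
  - by move=> x _; rewrite /= -EFinD lee_fin powR_norm_le_1Dsqr.
rewrite (ge0_integralD mu mD); last 4 first.
- by move=> x _; rewrite lee_fin.
- exact: measurable_cst.
- by move=> x _; rewrite lee_fin sqr_ge0.
- exact: mf2.
by rewrite integral_cst // mul1e lte_add_pinfty.
Qed.

Lemma integral_powR_norm_scale (f g : T -> R) (t : R) : 0 <= t ->
  measurable_fun D f -> measurable_fun D g ->
  {ae mu, forall x, D x -> g x = t * f x} ->
  (\int[mu]_(x in D) (`|g x| `^ p)%:E
   = (t `^ p)%:E * \int[mu]_(x in D) (`|f x| `^ p)%:E)%E.
Proof.
move=> t0 mf mg hae.
have fp0 x : D x -> (0 <= (`|f x| `^ p)%:E)%E by rewrite lee_fin powR_ge0.
rewrite -(ge0_integralZl_EFin mu mD fp0 (measurable_powR_norm mf)) ?powR_ge0 //.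
apply: ae_eq_integral => //.
- exact: measurable_powR_norm.
- by apply: emeasurable_funM => //; exact: measurable_powR_norm.
- apply: filterS hae => x hx Dx.
  by rewrite hx // normrM powRM // ger0_norm.
Qed.

End PowerIntegral.

Section Dual.
Variables (R : realType) (V : normedModType R).

Lemma in_dual_diff (F : V -> R) (u : V) :
  differentiable F u -> in_dual ('d F u).
Proof.
move=> dF; split; last exact: diff_continuous.
by move=> a v w; rewrite linearD linearZ.
Qed.

Lemma in_dual_inner_product (ip : V -> V -> R) (u : V) :
  inner_product_of ip -> in_dual (ip u).
Proof.
case=> hl hs hn.
have ipDl v w z : ip (v + w) z = ip v z + ip w z.
  by have := hl 1 v w z; rewrite scale1r mul1r.
split.
  by move=> a v w; rewrite hs hl (hs v) (hs w).
(* polarization: ip u is a combination of continuous norms *)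
have -> : ip u = (fun v => (`|u + v| ^+ 2 - `|u| ^+ 2 - `|v| ^+ 2) / 2).
  apply/funext => v; rewrite -!hn ipDl (hs u (u + v)) (hs v (u + v)) !ipDl.
  by rewrite (hs v u); field.
move=> x; have nuv : (fun v => `|u + v|) @ x --> `|u + x|.
  by apply: cvg_norm; apply: cvgD; [exact: cvg_cst | exact: cvg_id].
have nv : (fun v => `|v|) @ x --> `|x| by apply: cvg_norm; exact: cvg_id.
apply: cvgM; last exact: cvg_cst.
by apply: cvgB; [apply: cvgB; [exact: cvgM | exact: cvg_cst] | exact: cvgM].
Qed.

Lemma in_dual_comb (f g : V -> R) (a b : R) :
  in_dual f -> in_dual g -> in_dual (fun v => a * f v + b * g v).
Proof.
move=> [fl fc] [gl gc]; split.
  by move=> c u v; rewrite fl gl; ring.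
move=> x; apply: cvgD; apply: cvgM; by [exact: cvg_cst | exact: fc | exact: gc].
Qed.

End Dual.

Section RayStationarity.
Variables (R : realType) (V : normedModType R).

Lemma is_derive_along_ray (F : V -> R) (u : V) (t : R) :
  differentiable F (t *: u) ->
  is_derive t 1 (fun s : R => F (s *: u)) ('d F (t *: u) u).
Proof.
move=> dF; have ds : differentiable ( *:%R ^~ u : R -> V) t by [].
change (fun s : R => F (s *: u)) with (F \o ( *:%R ^~ u)).
apply: DeriveDef; first exact/diff_derivable/differentiable_comp.
by rewrite deriveE ?(diff_comp ds dF) /= ?diff_val ?scale1r //; exact: differentiable_comp.
Qed.

Lemma is_derive_ray_penalty (c k b p I t : R) : 0 < t ->
  is_derive t 1 (fun s : R => c * (s ^+ 2 * k) + b * (s `^ p * I))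
    (c * (2 * t * k) + b * (p * t `^ (p - 1) * I)).
Proof.
move=> t0.
have -> : (fun s : R => c * (s ^+ 2 * k) + b * (s `^ p * I)) =
    c \*: (((@id R) ^+ 2) * cst k) + b \*: ((@powR R ^~ p) * cst I).
  by apply/funext.
have dsq := is_deriveZ c (is_deriveM (is_deriveX 2 (@is_derive_id R R t 1))
  (is_derive_cst k t 1)).
have dpow := is_deriveZ b (is_deriveM (@is_derive1_powR R p t t0)
  (is_derive_cst I t 1)).
apply: (is_derive_eq (is_deriveD dsq dpow)).
rewrite /= !scaler0 !add0r [_%:A]mulr1 /cst expr1 -!mulrA.
by congr (_ * _ + _ * _); rewrite /GRing.scale /=; ring.
Qed.

Lemma near_one_ray (u : V) (rho : R) : 0 < rho ->
  exists2 del : R, 0 < del &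
    forall t, `|t - 1| < del -> 0 < t /\ `|t *: u - u| <= rho.
Proof.
move=> rho0; have nu0 := normr_ge0 u.
exists (Num.min 1 (rho / (`|u| + 1))).
  by rewrite lt_min ltr01 divr_gt0 //; lra.
move=> t; rewrite lt_min => /andP[t1 trho]; split.
  by move: t1; rewrite ltr_norml; lra.
rewrite -{2}(scale1r u) -scalerBl normrZ.
have : rho / (`|u| + 1) * `|u| <= rho by rewrite mulrAC ler_pdivrMr; nra.
by apply: le_trans; apply: ler_wpM2r => //; exact: ltW.
Qed.

Lemma ray_min_stationary (F : V -> R) (u : V) (alpha beta p I rho : R) :
  (forall v, differentiable F v) -> 0 < rho ->
  (forall t : R, 0 < t -> `|t *: u - u| <= rho ->
     F u + alpha / 2 * `|u| ^+ 2 + beta * I <=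
     F (t *: u) + alpha / 2 * `|t *: u| ^+ 2 + beta * (t `^ p * I)) ->
  'd F u u + alpha * `|u| ^+ 2 + beta * (p * I) = 0.
Proof.
move=> dF rho0 hmin; have [del del0 hdel] := near_one_ray u rho0.
pose h s := F (s *: u) + (alpha / 2 * (s ^+ 2 * `|u| ^+ 2) + beta * (s `^ p * I)).
have hd (s : R) : 0 < s -> is_derive s 1 h ('d F (s *: u) u +
    (alpha / 2 * (2 * s * `|u| ^+ 2) + beta * (p * s `^ (p - 1) * I))).
  move=> s0; apply: is_deriveD; first exact: is_derive_along_ray.
  exact: is_derive_ray_penalty.
have near1 t : t \in `]1 - del, 1 + del[ -> `|t - 1| < del.
  by rewrite in_itv /= ltr_norml => /andP[]; lra.
have h1 : is_derive (1 : R) 1 h 0.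
  apply: (@derive1_at_min R h (1 - del) (1 + del)); first lra.
  - by move=> t /near1 /hdel[/hd[]].
  - by rewrite in_itv /=; apply/andP; split; lra.
  move=> t /near1 /hdel[t0 ht]; have := hmin t t0 ht.
  rewrite /h scale1r expr1n mul1r powR1 mul1r normrZ gtr0_norm // exprMn.
  by rewrite !addrA.
have := derive_val (is_derive := hd 1 ltr01).
rewrite (derive_val (is_derive := h1)) scale1r powR1 => ->.
by field; lra.
Qed.

End RayStationarity.

Theorem theorem5p6
  (R : realType) (d : nat) (hd : (0 < d)%N)
  (leb : {measure set (Borel R d) -> \bar R}) (hleb : is_lebesgue_measure leb)
  (Om : set 'rV[R]_d) (hOm : bounded_lipschitz_domain Om)
  (V : completeNormedModType R) (ip : V -> V -> R) (hip : inner_product_of ip)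
  (iota : V -> 'rV[R]_d -> R)
  (iota_lin : forall (a : R) (u v : V),
     {ae leb, forall x : Borel R d, Om x ->
        iota (a *: u + v) x = a * iota u x + iota v x})
  (iota_L2 : forall u : V, L2_on leb Om (iota u))
  (iota_inj : forall u : V,
     {ae leb, forall x : Borel R d, Om x -> iota u x = 0} -> u = 0)
  (iota_cont : exists C : R, forall u : V,
     (L2_dist2 leb Om (iota u) (fun=> 0%R) <= (C * `|u| ^+ 2)%:E)%E)
  (iota_compact : forall u_ : nat -> V, (exists M : R, forall n, `|u_ n| <= M) ->
     exists (phi : nat -> nat) (f : 'rV[R]_d -> R),
       [/\ forall n, (phi n < phi n.+1)%N, L2_on leb Om f &
           (fun n => L2_dist2 leb Om (iota (u_ (phi n))) f) @ \oo --> 0%E])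
  (iota_dense : forall f : 'rV[R]_d -> R, L2_on leb Om f ->
     forall eps : R, 0 < eps -> exists u : V, (L2_dist2 leb Om (iota u) f < eps%:E)%E)
  (F : V -> R) (hF_wlsc : weakly_lsc F)
  (hF_below : exists (g : V -> R) (c : R), in_dual g /\ forall u, g u + c <= F u)
  (hF_C1 : C1_frechet F)
  (alpha beta p : R) (halpha : 0 < alpha) (hbeta : 0 < beta) (hp0 : 0 < p) (hp1 : p < 1)
  (ubar : V)
  (hloc : exists2 rho : R, 0 < rho & forall u : V, `|u - ubar| <= rho ->
     ((F ubar + alpha / 2 * `|ubar| ^+ 2)%:E
        + beta%:E * \int[leb]_(x in (Om : set (Borel R d))) (`|iota ubar x| `^ p)%:E
      <= (F u + alpha / 2 * `|u| ^+ 2)%:E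
        + beta%:E * \int[leb]_(x in (Om : set (Borel R d))) (`|iota u x| `^ p)%:E)%E) :
  exists lambda : V -> R,
    [/\ in_dual lambda,
        forall v : V, alpha * ip ubar v + beta * lambda v = - ('d F ubar v) &
        ((lambda ubar)%:E
           = p%:E * \int[leb]_(x in (Om : set (Borel R d))) (`|iota ubar x| `^ p)%:E)%E].
Proof.
have [oOm bOm _] := hOm; have mOm : measurable (Om : set (Borel R d)).
  exact: sub_sigma_algebra.
pose J := (\int[leb]_(x in (Om : set (Borel R d))) (`|iota ubar x| `^ p)%:E)%E.
have J0 : (0 <= J)%E by apply: integral_ge0 => x _; rewrite lee_fin powR_ge0.
have [mubar ubar2] := iota_L2 ubar.
have Jfin : (J < +oo)%E.
  exact (integral_powR_norm_lty mOm hp0 hp1 (bounded_measure_lty hleb mOm bOm) mubar ubar2).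
pose I := fine J.
have JI : J = I%:E by rewrite fineK // ge0_fin_numE // Jfin.
have Jray t : 0 <= t ->
    (\int[leb]_(x in (Om : set (Borel R d))) (`|iota (t *: ubar) x| `^ p)%:E)%E
    = (t `^ p * I)%:E.
  move=> t0; rewrite (integral_powR_norm_scale p mOm t0 mubar (iota_L2 _).1).
    by rewrite -/J JI -EFinM.
  exact: ae_linear_scale.
have [rho rho0 hrho] := hloc.
have stat : 'd F ubar ubar + alpha * `|ubar| ^+ 2 + beta * (p * I) = 0.
  apply: (ray_min_stationary hF_C1.1 rho0) => t t0 /hrho.
  by rewrite -/J JI (Jray _ (ltW t0)) -!EFinM -!EFinD lee_fin.
exists (fun v => (- beta^-1) * 'd F ubar v + (- (alpha / beta)) * ip ubar v).
have beta0 : beta != 0 by rewrite gt_eqF.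
split.
- exact/in_dual_comb/in_dual_inner_product/hip/in_dual_diff/hF_C1.1.
- by move=> v; field.
- rewrite -/J JI -EFinM; congr (_%:E); have [_ _ ->] := hip.
  have -> : 'd F ubar ubar = - (alpha * `|ubar| ^+ 2 + beta * (p * I)) by lra.
  by field.
Qed.
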